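(* Let $q$ be a prime power, $m\ge 1$, and let $L=\{\alpha_1,\dots,\alpha_n\}\subseteq GF(q^m)\setminus\{0\}$. Then the $q$-ary Goppa code $\Gamma(L,G)$ with $G(x)=x^{q}$ is equivalent to the $q$-ary Goppa code $\Gamma(L,G^{*})$ with $G^{*}(x)=x^{q-1}$.
   Context: For a set $L=\{\alpha_1,\dots,\alpha_n\}$ of distinct elements of $GF(q^m)$ and a polynomial $G\in GF(q^m)[x]$ with $G(\alpha_k)\neq 0$ for all $k$, the $q$-ary Goppa code is $\Gamma(L,G)=\{c\in GF(q)^n:\ \sum_{k=1}^n \frac{c_k}{x-\alpha_k}\equiv 0 \pmod{G(x)}\}$; equivalently, $c\in GF(q)^n$ lies in $\Gamma(L,G)$ iff $\sum_k c_k\,\alpha_k^s/G(\alpha_k)=0$ for $s=0,1,\dots,\deg G-1$. Two codes of length $n$ are equivalent if one is obtained from the other by a permutation of coordinates. *)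

From HB Require Import structures.
From mathcomp Require Import all_boot all_order all_algebra all_fingroup all_field.
Set Implicit Arguments. Unset Strict Implicit. Unset Printing Implicit Defensive.
Import GRing.Theory.
Local Open Scope ring_scope.

(* GF(q) is the finite field K, GF(q^m) is a (finite-dimensional, hence finite)
   field extension F of K; q = #|K|, m = \dim {:F}. *)

(* q-ary Goppa code Gamma(L,G), L = (alpha_1..alpha_n), via the parity-check
   characterization: sum_k c_k alpha_k^s / G(alpha_k) = 0 for s = 0..deg G - 1. *)
Definition goppa_code (K : finFieldType) (F : fieldExtType K) (n : nat)
    (alpha : 'I_n -> F) (G : {poly F}) : {set 'rV[K]_n} :=
  [set c : 'rV[K]_n | [forall s : 'I_(size G).-1,
      \sum_(k < n) ((c 0 k)%:A * alpha k ^+ s / G.[alpha k]) == 0]].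

Definition codes_equiv (K : finFieldType) (n : nat) (C1 C2 : {set 'rV[K]_n}) : Prop :=
  exists sigma : 'S_n, forall c : 'rV[K]_n, (c \in C1) = (col_perm sigma c \in C2).

From mathcomp Require Import all_boot all_order all_algebra all_fingroup all_field.
From mathcomp Require Import all_solvable zify.
Set Implicit Arguments. Unset Strict Implicit. Unset Printing Implicit Defensive.
Import GRing.Theory.
Local Open Scope ring_scope.

(* With G = x^m the parity checks read  sum_k c_k alpha_k^(s-m) = 0  for s < m,
   i.e. the power sums of exponents -m, ..., -1.  For m = q these are the
   exponents -q, ..., -1, for m = q - 1 the exponents -(q-1), ..., -1.  The one
   extra check of Gamma(L, x^q), the exponent -q, is the q-th power of the
   check for the exponent -1, because c_k^q = c_k for c_k in GF(q).  Hence the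
   two codes are equal, and the identity permutation witnesses equivalence. *)

Lemma pnat_pchar_card (K : finFieldType) : [pchar K].-nat #|K|.
Proof.
have [p pr_p pK] := finPcharP K.
have := abelem_pgroup (fin_ring_pchar_abelem pK).
rewrite /pgroup cardsT; apply: sub_in_pnat => r _.
by rewrite inE => /eqP ->.
Qed.

Section FrobeniusOverFiniteField.

Variables (K : finFieldType) (A : comAlgType K).

Lemma exprD_card (x y : A) : (x + y) ^+ #|K| = x ^+ #|K| + y ^+ #|K|.
Proof.
apply: exprDn_pchar; apply: sub_in_pnat (pnat_pchar_card K) => p _.
by rewrite (pchar_lalg A).
Qed.

Lemma scalar_expr_card (c : K) : (c%:A : A) ^+ #|K| = c%:A.
Proof. by rewrite -(rmorphXn (in_alg A)) /= expf_card. Qed.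

End FrobeniusOverFiniteField.

Section GoppaMonomial.

Variables (K : finFieldType) (F : fieldExtType K) (n : nat).
Variables (alpha : 'I_n -> F) (c : 'rV[K]_n).

Definition goppa_syndrome (m s : nat) : F :=
  \sum_(k < n) (c 0 k)%:A * alpha k ^+ s / alpha k ^+ m.

Lemma goppa_code_XnP (m : nat) :
  reflect (forall s, (s < m)%N -> goppa_syndrome m s = 0)
          (c \in goppa_code alpha 'X^m).
Proof.
rewrite inE size_polyXn /=.
have syndromeE s : \sum_(k < n) (c 0 k)%:A * alpha k ^+ s / 'X^m.[alpha k]
                   = goppa_syndrome m s.
  by apply: eq_bigr => k _; rewrite hornerXn.
apply: (iffP forallP) => [checks s lt_sm | checks s].
  by rewrite -syndromeE; apply/eqP/(checks (Ordinal lt_sm)).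
by rewrite syndromeE checks.
Qed.

Lemma goppa_syndrome_expr_card (m s : nat) :
  goppa_syndrome m s ^+ #|K| = goppa_syndrome (m * #|K|) (s * #|K|).
Proof.
have zero_exp : (0 : F) ^+ #|K| = 0.
  by rewrite expr0n eqn0Ngt (ltnW (finNzRing_gt1 K)).
rewrite /goppa_syndrome (big_morph _ (@exprD_card K F) zero_exp).
by apply: eq_bigr => k _; rewrite expr_div_n exprMn scalar_expr_card -!exprM.
Qed.

Hypothesis alpha_nz : forall k, alpha k != 0.

Lemma goppa_syndrome_shift (d m s : nat) :
  goppa_syndrome (d + m) (d + s) = goppa_syndrome m s.
Proof.
apply: eq_bigr => k _; rewrite !exprD invfM -!mulrA; congr (_ * _).
by rewrite mulrCA mulVKf ?expf_neq0.
Qed.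

End GoppaMonomial.

Theorem lemma1 (K : finFieldType) (F : fieldExtType K) (n : nat)
    (alpha : 'I_n -> F) (alpha_inj : injective alpha)
    (alpha_nz : forall k, alpha k != 0) :
  codes_equiv (goppa_code alpha 'X^#|K|) (goppa_code alpha 'X^(#|K|.-1)).
Proof.
exists 1%g => c; rewrite col_perm1.
have q_gt1 : (1 < #|K|)%N := finNzRing_gt1 K.
set q := #|K| in q_gt1 *.
have qE : q.-1.+1 = q := prednK (ltnW q_gt1).
have shift1 s : goppa_syndrome alpha c q.-1 s = goppa_syndrome alpha c q s.+1.
  by rewrite -(goppa_syndrome_shift c alpha_nz 1) add1n qE.
have frobenius_check :
    goppa_syndrome alpha c q 0 = goppa_syndrome alpha c q q.-1 ^+ q.
  rewrite -{1}(mul1n q) -(mul0n q) -goppa_syndrome_expr_card.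
  by rewrite -(goppa_syndrome_shift c alpha_nz q.-1) addn1 addn0 qE.
apply/goppa_code_XnP/goppa_code_XnP => checks s lt_s.
  by rewrite shift1 checks //; lia.
case: s lt_s => [_ | s lt_s]; last by rewrite -shift1 checks //; lia.
have qE2 : q.-2.+1 = q.-1 by lia.
rewrite frobenius_check -[X in goppa_syndrome _ _ _ X]qE2 -shift1 checks; last lia.
by rewrite -qE expr0n.
Qed.
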